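(* For all $n\ge2$, $p_n(1123,1234)=p_n(1122,1233)=2^{n-5}(n^2-n+14)$.
   Context: Set partitions of $[n]$ are written in canonical sequential form (restricted growth words $\pi_1\cdots\pi_n$ with $\pi_1=1$, $\pi_{i+1}\le\max(\pi_1,\dots,\pi_i)+1$). A partition contains a pattern if it has a subsequence order-isomorphic to it; $p_n(T)$ counts partitions of $[n]$ avoiding every pattern in $T$. *)

From HB Require Import structures.
From mathcomp Require Import all_boot all_order all_algebra.
Set Implicit Arguments. Unset Strict Implicit. Unset Printing Implicit Defensive.

(* A word w = pi_1 ... pi_n (pi_i : nat) is in canonical sequential form
   (restricted growth word) iff pi_1 = 1, every letter is >= 1, and
   pi_{i+1} <= max(pi_1,...,pi_i) + 1 for every i. *)
Definition is_rgf (w : seq nat) : bool :=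
  [&& head 0 w == 1, all (fun x => 0 < x) w &
      [forall i : 'I_(size w),
         (0 < i) ==> (nth 0 w i <= \max_(j < i) nth 0 w j + 1)]].

Definition order_iso (s sigma : seq nat) : bool :=
  (size s == size sigma) &&
  [forall i : 'I_(size s), forall j : 'I_(size s),
     (nth 0 s i < nth 0 s j) == (nth 0 sigma i < nth 0 sigma j)].

Definition contains (w sigma : seq nat) : bool :=
  [exists m : (size w).-tuple bool, order_iso (mask m w) sigma].

Definition avoids_all (T : seq (seq nat)) (w : seq nat) : bool :=
  all (fun sigma => ~~ contains w sigma) T.

(* p_n(T): number of set partitions of [n] (as restricted growth words of
   length n; their letters are in 1..n) avoiding every pattern in T. *)
Definition p_ (n : nat) (T : seq (seq nat)) : nat :=
  #|[pred t : n.-tuple 'I_n.+1 |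
       is_rgf (map val t) && avoids_all T (map val t)]|.

(* A partition is built letter by letter as a restricted growth word.  For
   both pattern pairs T, whether a letter x may be appended to a T-avoiding
   word w depends only on the "state" of w: its largest letter m, whether w
   contains the subsequence 11, and whether it contains 112.  Consequently
   the number of T-avoiding completions of w by r more letters is a function
   [Fstate m (11 in w) (112 in w) r] of the state alone, which we define by
   explicit recurrences and check against the one-letter extension rules of
   each pattern pair. *)
From mathcomp Require Import all_boot all_order all_algebra.
From mathcomp Require Import zify.
Set Implicit Arguments. Unset Strict Implicit. Unset Printing Implicit Defensive.

(** * Counting completions of words *)

Fixpoint words (K r : nat) : seq (seq nat) :=
  if r is r'.+1 then [seq x :: u | x <- iota 0 K.+1, u <- words K r'] else [:: [::]].

Lemma words_uniq K r : uniq (words K r).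
Proof.
elim: r => [//|r IH]; apply: allpairs_uniq => //; first exact: iota_uniq.
by move=> [x1 u1] [x2 u2] _ _ /= [-> ->].
Qed.

Lemma mem_words K r s : (s \in words K r) = (size s == r) && all (fun x => x < K.+1) s.
Proof.
elim: r s => [|r IH] s; first by case: s.
apply/allpairsP/idP => [[[x u] [Hx Hu ->]]|].
  by move: Hx Hu; rewrite IH mem_iota /= eqSS => -> /andP [-> ->].
case: s => [//|x u] /andP [Hs /andP [Hx Hu]].
exists (x, u); split => //; first by rewrite mem_iota.
by change (u \in words K r); rewrite IH -eqSS Hs.
Qed.

Lemma card_count (T : finType) (P : pred T) : #|[pred t | P t]| = count P (enum T).
Proof. by rewrite cardE /enum_mem size_filter count_filter; apply: eq_count => x /=; rewrite andbT. Qed.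

Lemma p_count n T : p_ n T = count (fun u => is_rgf u && avoids_all T u) (words n n).
Proof.
rewrite /p_ card_count.
rewrite -(count_map (fun t : n.-tuple 'I_n.+1 => map val t) (fun u => is_rgf u && avoids_all T u)).
apply/permP; apply: uniq_perm.
- rewrite map_inj_uniq ?enum_uniq //.
  by move=> t1 t2 /(inj_map val_inj) /val_inj.
- exact: words_uniq.
move=> s; rewrite mem_words; apply/mapP/idP.
  move=> [t _ ->]; rewrite size_map size_tuple eqxx /=.
  by apply/allP => x /mapP [i _ ->]; exact: ltn_ord.
case/andP => /eqP Hs /allP Ha.
have Hs' : size (map (@inord n) s) == n by rewrite size_map Hs.
exists (Tuple Hs'); first by rewrite mem_enum.
rewrite /= -map_comp map_id_in // => x Hx /=.
by rewrite inordK //; apply: Ha.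
Qed.

Definition completions (V : pred (seq nat)) (K : nat) (w : seq nat) (r : nat) : nat :=
  count (fun u => V (w ++ u)) (words K r).

Lemma completions0 V K w : completions V K w 0 = V w.
Proof. by rewrite /completions /= cats0 addn0. Qed.

Lemma completionsS V K w r :
  completions V K w r.+1 = \sum_(0 <= x < K.+1) completions V K (rcons w x) r.
Proof.
rewrite /completions /index_iota subn0.
have -> : words K r.+1 = [seq x :: u | x <- iota 0 K.+1, u <- words K r] by [].
elim: (iota 0 K.+1) => [|x s IH]; first by rewrite big_nil.
rewrite big_cons count_cat count_map IH; congr (_ + _).
by apply: eq_count => u /=; rewrite cat_rcons.
Qed.

Lemma sum_indicator a c N : \sum_(0 <= x < N) ((x == a) * c) = (a < N) * c.
Proof.
elim: N => [|N IH]; first by rewrite big_geq.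
rewrite big_nat_recr //= IH [a < N.+1]ltnS [a <= N]leq_eqVlt eq_sym.
by case: eqVneq => [->|_]; rewrite ?ltnn /= ?mul0n ?addn0 ?add0n.
Qed.

(* Transfer lemma: a function satisfying the one-letter recursion of a
   prefix-closed language counts the completions of its words, as long as
   the alphabet {0, ..., K} is large enough for every added letter. *)
Section Transfer.
Variable V : pred (seq nat).
Variable K : nat.
Variable F : seq nat -> nat -> nat.
Hypothesis V_prefix : forall w x, w != [::] -> V (rcons w x) -> V w.
Hypothesis F0 : forall w, V w -> F w 0 = 1.
Hypothesis FS : forall w r, V w -> size w + r.+1 <= K ->
  \sum_(0 <= x < K.+1) (V (rcons w x) * F (rcons w x) r) = F w r.+1.

Lemma V_prefix_cat v u : v != [::] -> V (v ++ u) -> V v.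
Proof.
elim/last_ind: u => [|u y IH] Hv; first by rewrite cats0.
rewrite -rcons_cat => /V_prefix H; apply: IH (Hv) (H _).
by case: (v) Hv.
Qed.

Lemma completions_invalid w r : w != [::] -> ~~ V w -> completions V K w r = 0.
Proof.
move=> Hw Hv; apply/eqP; rewrite eqn0Ngt -has_count; apply/hasPn => u _.
by apply: contra Hv; apply: V_prefix_cat.
Qed.

Lemma completions_transfer r w : V w -> size w + r <= K -> completions V K w r = F w r.
Proof.
elim: r w => [|r IH] w Hv Hs; first by rewrite completions0 Hv F0.
rewrite completionsS -FS //; apply: eq_bigr => x _.
case Hx: (V (rcons w x)).
  by rewrite IH ?mul1n // size_rcons addSn -addnS.
by rewrite completions_invalid ?Hx //; case: (w).
Qed.
End Transfer.

(** * Subsequences and restricted growth words *)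

Lemma subseq_rcons2 (T : eqType) (s w : seq T) x y :
  subseq (rcons s y) (rcons w x) = subseq (rcons s y) w || (y == x) && subseq s w.
Proof.
rewrite -[LHS]subseq_rev !rev_rcons /=.
case: eqVneq => [->|_] /=; last by rewrite orbF -[RHS]subseq_rev rev_rcons.
rewrite -[subseq (rcons s x) w]subseq_rev -[subseq s w]subseq_rev rev_rcons.
case H: (subseq (rev s) (rev w)); first by rewrite orbT.
rewrite orbF; apply/esym/negbTE; apply: contraFN H; exact: subseq_trans (subseq_cons _ x).
Qed.

(* The largest letter of a word (0 for the empty word). *)
Definition maxl (w : seq nat) : nat := \max_(j < size w) nth 0 w j.

Lemma maxl_rcons w x : maxl (rcons w x) = maxn (maxl w) x.
Proof.
rewrite /maxl size_rcons big_ord_recr /= nth_rcons ltnn eqxx; congr maxn.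
by apply: eq_bigr => j _; rewrite nth_rcons ltn_ord.
Qed.

Lemma mem_leq_maxl w y : y \in w -> y <= maxl w.
Proof.
move=> Hy; rewrite -(nth_index 0 Hy) /maxl.
have Hi : index y w < size w by rewrite index_mem.
exact: (leq_bigmax_cond (Ordinal Hi)).
Qed.

Lemma iota_rcons m n : iota m n.+1 = rcons (iota m n) (m + n).
Proof. by rewrite -addn1 iotaD cats1. Qed.

Definition rgf_at (w : seq nat) (i : nat) : bool :=
  (0 < i) ==> (nth 0 w i <= \max_(j < i) nth 0 w j + 1).

Lemma is_rgfE w :
  is_rgf w = [&& head 0 w == 1, all (fun x => 0 < x) w & all (rgf_at w) (iota 0 (size w))].
Proof.
congr [&& _, _ & _]; apply/forallP/allP => [H i | H i]; last by apply: H; rewrite mem_iota /=.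
by rewrite mem_iota /= => Hi; exact: (H (Ordinal Hi)).
Qed.

Lemma rgf_at_rcons w x i : i <= size w ->
  rgf_at (rcons w x) i = if i == size w then (0 < i) ==> (x <= (maxl w).+1) else rgf_at w i.
Proof.
move=> Hi; rewrite /rgf_at nth_rcons.
have -> : \max_(j < i) nth 0 (rcons w x) j = \max_(j < i) nth 0 w j.
  by apply: eq_bigr => j _; rewrite nth_rcons (leq_trans (ltn_ord j) Hi).
case: eqVneq => [->|Hne]; first by rewrite ltnn addn1.
by have -> : i < size w by rewrite ltn_neqAle Hne.
Qed.

Lemma rgf_rcons w x : is_rgf (rcons w x) =
  if w is [::] then x == 1 else [&& is_rgf w, 0 < x & x <= (maxl w).+1].
Proof.
case: w => [|y w]; first by rewrite is_rgfE /= andbT; case: x => [|[|x]].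
set w' := y :: w.
have Eprev : all (rgf_at (rcons w' x)) (iota 0 (size w')) = all (rgf_at w') (iota 0 (size w')).
  apply: eq_in_all => i; rewrite mem_iota => /andP [_ Hi].
  by rewrite rgf_at_rcons ?(ltnW Hi) // ltn_eqF.
have Ehead : head 0 (rcons w' x) = head 0 w' by [].
rewrite !is_rgfE size_rcons iota_rcons !all_rcons add0n Eprev Ehead rgf_at_rcons // eqxx implyTb.
by case: (_ == 1); case: (0 < x); case: all; case: all; case: (x <= _).
Qed.

Lemma rgf_prefix w x : w != [::] -> is_rgf (rcons w x) -> is_rgf w.
Proof. by case: w => [//|y w] _; rewrite rgf_rcons => /and3P []. Qed.

Lemma rgf_pos w y : is_rgf w -> y \in w -> 0 < y.
Proof. by case/and3P => _ /allP H _ /H. Qed.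

Lemma rgf_has1 w : is_rgf w -> 1 \in w.
Proof. by case: w => [|y w] //; case/and3P => /= /eqP -> _ _; rewrite mem_head. Qed.

(* A restricted growth word whose maximum is at least k contains 1 2 ... k
   as a subsequence: each new maximum is introduced after all smaller ones. *)
Lemma rgf_iota w k : is_rgf w -> k <= maxl w -> subseq (iota 1 k) w.
Proof.
elim/last_ind: w k => [|w x IH] k //.
case: w IH => [|y w] IH.
  by rewrite rgf_rcons maxl_rcons /maxl big_ord0 max0n => /eqP ->; case: k => [|[|k]].
set w' := y :: w; rewrite rgf_rcons maxl_rcons => /and3P [Hr Hx Hxm] Hk.
case: (leqP k (maxl w')) => Hkm.
  exact: subseq_trans (IH _ Hr Hkm) (subseq_rcons _ _).
have [Ek Ex] : k = (maxl w').+1 /\ x = (maxl w').+1 by lia.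
by rewrite Ek iota_rcons subseq_rcons2 Ex add1n eqxx IH ?orbT.
Qed.

Lemma maxl_pos w : is_rgf w -> 0 < maxl w.
Proof. by move/rgf_has1/mem_leq_maxl. Qed.

(* The alphabet {0, ..., size w} contains every letter of a restricted
   growth word w; this bounds the letters that completions need. *)
Lemma maxl_le_size w : is_rgf w -> maxl w <= size w.
Proof. by move=> H; have := size_subseq (rgf_iota H (leqnn _)); rewrite size_iota. Qed.

Lemma rgf_rcons_valid w x : is_rgf w -> is_rgf (rcons w x) = (0 < x) && (x <= (maxl w).+1).
Proof. by case: w => [//|y w] Hr; rewrite rgf_rcons Hr. Qed.

(** * Pattern containment *)

Lemma containsP w sigma :
  reflect (exists2 s, subseq s w & order_iso s sigma) (contains w sigma).
Proof.
apply: (iffP existsP) => [[m Hm] | [s Hs Hi]].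
  by exists (mask m w) => //; exact: mask_subseq.
case/subseqP: Hs Hi => m Hm -> Hi.
have Hm' : size m == size w by apply/eqP.
by exists (Tuple Hm').
Qed.

Lemma order_iso_size s sigma : order_iso s sigma -> size s = size sigma.
Proof. by case/andP => /eqP. Qed.

Lemma contains_rcons w x sigma : contains w sigma -> contains (rcons w x) sigma.
Proof.
case/containsP => s Hs Hi; apply/containsP; exists s => //.
exact: subseq_trans Hs (subseq_rcons w x).
Qed.

Lemma avoids_prefix T w x : avoids_all T (rcons w x) -> avoids_all T w.
Proof. by move/allP => H; apply/allP => sigma /H; apply: contra; apply: contains_rcons. Qed.

Lemma contains_rcons4P w x sigma : contains (rcons w x) sigma -> size sigma = 4 ->
  contains w sigma \/ exists a b c, subseq [:: a; b; c] w /\ order_iso [:: a; b; c; x] sigma.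
Proof.
move=> /containsP [s Hs Hi] Hsz; have := order_iso_size Hi; rewrite Hsz.
case/lastP: s Hs Hi => [//|s y] Hs Hi Hs4.
rewrite subseq_rcons2 in Hs; case/orP: Hs => [Hs|/andP [/eqP Hy Hs]].
  by left; apply/containsP; exists (rcons s y).
right; subst y; rewrite size_rcons in Hs4.
by case: s Hs Hi Hs4 => [|a [|b [|c [|e s]]]] //= Hs Hi _; exists a, b, c.
Qed.

Lemma contains_rcons_last w x a b c sigma : subseq [:: a; b; c] w ->
  order_iso [:: a; b; c; x] sigma -> contains (rcons w x) sigma.
Proof.
move=> Hs Hi; apply/containsP; exists (rcons [:: a; b; c] x) => //.
by rewrite subseq_rcons2 eqxx Hs orbT.
Qed.

Lemma order_isoE s sigma : order_iso s sigma = (size s == size sigma) &&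
  all (fun i => all (fun j => (nth 0 s i < nth 0 s j) == (nth 0 sigma i < nth 0 sigma j))
    (iota 0 (size s))) (iota 0 (size s)).
Proof.
rewrite /order_iso; congr andb; apply/forallP/allP => [H i | H i].
  rewrite mem_iota /= => Hi; apply/allP => j; rewrite mem_iota /= => Hj.
  exact: (forallP (H (Ordinal Hi)) (Ordinal Hj)).
apply/forallP => j; have := H i; rewrite mem_iota /= ltn_ord => /(_ isT) /allP; apply.
by rewrite mem_iota /=.
Qed.

Lemma iso1123 a b c d : order_iso [:: a; b; c; d] [:: 1; 1; 2; 3] = [&& a == b, b < c & c < d].
Proof. by rewrite order_isoE /=; apply/idP/idP; lia. Qed.

Lemma iso1234 a b c d : order_iso [:: a; b; c; d] [:: 1; 2; 3; 4] = [&& a < b, b < c & c < d].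
Proof. by rewrite order_isoE /=; apply/idP/idP; lia. Qed.

Lemma iso1122 a b c d : order_iso [:: a; b; c; d] [:: 1; 1; 2; 2] = [&& a == b, b < c & c == d].
Proof. by rewrite order_isoE /=; apply/idP/idP; lia. Qed.

Lemma iso1233 a b c d : order_iso [:: a; b; c; d] [:: 1; 2; 3; 3] = [&& a < b, b < c & c == d].
Proof. by rewrite order_isoE /=; apply/idP/idP; lia. Qed.

(** * One-letter extension rules for the two pattern pairs *)

(* The two boolean components of the state of a word. *)
Definition has11 (w : seq nat) : bool := subseq [:: 1; 1] w.
Definition has112 (w : seq nat) : bool := subseq [:: 1; 1; 2] w.

Lemma has11_rcons w x : has11 (rcons w x) = has11 w || (x == 1) && (1 \in w).
Proof. by rewrite /has11 -[[:: 1; 1]]/(rcons [:: 1] 1) subseq_rcons2 sub1seq eq_sym. Qed.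

Lemma has112_rcons w x : has112 (rcons w x) = has112 w || (x == 2) && has11 w.
Proof. by rewrite /has112 -[[:: 1; 1; 2]]/(rcons [:: 1; 1] 2) subseq_rcons2 eq_sym. Qed.

Lemma has112_maxl w : has112 w -> 2 <= maxl w.
Proof. by move=> H; apply: mem_leq_maxl; apply: (mem_subseq H); rewrite !inE. Qed.

Definition valid (T : seq (seq nat)) (w : seq nat) : bool := is_rgf w && avoids_all T w.

Lemma valid_prefix T w x : w != [::] -> valid T (rcons w x) -> valid T w.
Proof. by move=> Hw /andP [/(rgf_prefix Hw) Hr /avoids_prefix Ha]; apply/andP. Qed.

Definition TA : seq (seq nat) := [:: [:: 1; 1; 2; 3]; [:: 1; 2; 3; 4]].
Definition TB : seq (seq nat) := [:: [:: 1; 1; 2; 2]; [:: 1; 2; 3; 3]].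

Lemma subseq3_bounds w a b c : is_rgf w -> subseq [:: a; b; c] w -> 0 < a /\ c <= maxl w.
Proof.
move=> Hr Hs; split; first by apply: (rgf_pos Hr); apply: (mem_subseq Hs); rewrite mem_head.
by apply: mem_leq_maxl; apply: (mem_subseq Hs); rewrite !inE eqxx !orbT.
Qed.

(* Avoiding 1234 bounds the maximum by 3, since 1 2 ... m is a subsequence. *)
Lemma validA_maxl w : valid TA w -> maxl w <= 3.
Proof.
case/andP => Hr /and3P [_ H4 _]; rewrite leqNgt; apply: contra H4 => Hm.
by apply/containsP; exists [:: 1; 2; 3; 4]; rewrite ?(rgf_iota Hr Hm) ?iso1234.
Qed.

(* For {1123, 1234}: a new letter x must be at most 3, and x = 3 needs w
   to avoid 112 (otherwise 1123 appears). *)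
Lemma validA_rcons w x : valid TA w ->
  valid TA (rcons w x) = [&& 0 < x, x <= (maxl w).+1, x <= 3 & (x == 3) ==> ~~ has112 w].
Proof.
move=> Hv; have Hm3 := validA_maxl Hv.
case/andP: Hv => Hr /and3P [nA nB _].
rewrite /valid rgf_rcons_valid // /avoids_all /= andbT -!andbA.
case: (boolP (0 < x)) => //= Hx; case: (boolP (x <= (maxl w).+1)) => //= Hxm.
apply/idP/idP.
- case/andP => nA' nB'.
  have Hx3 : x <= 3.
    rewrite leqNgt; apply: contra nB' => H4.
    apply: (@contains_rcons_last _ _ 1 2 3); last by rewrite iso1234; lia.
    by apply: (@rgf_iota w 3 Hr); lia.
  rewrite Hx3; apply/implyP => /eqP Ex; subst x; apply: contra nA' => Hc.
  by apply: (@contains_rcons_last _ _ 1 1 2); rewrite ?iso1123.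
- case/andP => Hx3 Hc; apply/andP; split; apply/negP => /contains_rcons4P /(_ erefl) [].
  + exact/negP.
  + move=> [a [b [c [Hs]]]]; rewrite iso1123 => /and3P [/eqP Eab Hbc Hcx].
    have [Ha _] := subseq3_bounds Hr Hs.
    have Ex : x = 3 by lia.
    have Eb : b = 1 by lia.
    have Ec : c = 2 by lia.
    by subst; move: Hc; rewrite eqxx /= /has112 Hs.
  + exact/negP.
  + move=> [a [b [c [Hs]]]]; rewrite iso1234 => /and3P [Hab Hbc Hcx].
    have [Ha _] := subseq3_bounds Hr Hs; lia.
Qed.

Lemma subseq_12x x : 3 <= x -> subseq [:: 1; 2; x] (iota 1 x).
Proof.
move=> Hx; have -> : x = (x - 3).+3 by lia.
rewrite (_ : iota 1 (x - 3).+3 = 1 :: 2 :: iota 3 (x - 3).+1) // iota_rcons /=.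
by rewrite sub1seq mem_rcons inE addnC addn3 eqxx.
Qed.

(* For {1122, 1233}: x = 2 needs w to avoid 112 (otherwise 1122 appears),
   and a letter x >= 3 must be a new maximum (otherwise 1 2 x x appears). *)
Lemma validB_rcons w x : valid TB w ->
  valid TB (rcons w x) =
  [&& 0 < x, x <= (maxl w).+1, (x == 2) ==> ~~ has112 w & (3 <= x) ==> (maxl w < x)].
Proof.
case/andP => Hr /and3P [nA nB _].
rewrite /valid rgf_rcons_valid // /avoids_all /= andbT -!andbA.
case: (boolP (0 < x)) => //= Hx; case: (boolP (x <= (maxl w).+1)) => //= Hxm.
apply/idP/idP.
- case/andP => nA' nB'; apply/andP; split.
    apply/implyP => /eqP Ex; subst x; apply: contra nA' => Hc.
    by apply: (@contains_rcons_last _ _ 1 1 2); rewrite ?iso1122.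
  apply/implyP => H3; rewrite ltnNge; apply: contra nB' => Hxm'.
  apply: (@contains_rcons_last _ _ 1 2 x); last by rewrite iso1233; lia.
  exact: subseq_trans (subseq_12x H3) (rgf_iota Hr Hxm').
- case/andP => H2 H3; apply/andP; split; apply/negP => /contains_rcons4P /(_ erefl) [].
  + exact/negP.
  + move=> [a [b [c [Hs]]]]; rewrite iso1122 => /and3P [/eqP Eab Hbc /eqP Hcx].
    have [Ha Hc] := subseq3_bounds Hr Hs.
    have Ex : x = 2 by move: H3; case: (leqP 3 x) => /= ? ?; lia.
    have Eb : b = 1 by lia.
    by subst; move: H2; rewrite eqxx /= /has112 Hs.
  + exact/negP.
  + move=> [a [b [c [Hs]]]]; rewrite iso1233 => /and3P [Hab Hbc /eqP Hcx].
    have [Ha Hc] := subseq3_bounds Hr Hs.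
    by move: H3; case: (leqP 3 x) => /= ? ?; lia.
Qed.

(** * The number of completions as a function of the state *)

(* f1 r, f2 r: completions of a word with maximum >= 2 avoiding 112, which
   contains 11 (f1) or not (f2); f3 r: completions of the word 1. *)
Fixpoint f1 (r : nat) : nat := if r is r'.+1 then 2 * f1 r' + 2 ^ r' else 1.
Fixpoint f2 (r : nat) : nat := if r is r'.+1 then f1 r' + 2 * f2 r' else 1.
Definition f3 (r : nat) : nat := if r is r'.+1 then 2 ^ r' + f2 r' else 1.

(* Completions by r letters of a word with maximum m, containing 11 iff a and
   containing 112 iff b.  Once 112 (or, for m = 1, 11) occurs, exactly two
   letters may be appended at every step, for either pattern pair. *)
Definition Fstate (m : nat) (a b : bool) (r : nat) : nat :=
  if b then 2 ^ r
  else if m <= 1 then (if a then 2 ^ r else f3 r)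
  else if a then f1 r else f2 r.

Definition Fword (w : seq nat) (r : nat) : nat := Fstate (maxl w) (has11 w) (has112 w) r.

Lemma Fword0 w : Fword w 0 = 1.
Proof. by rewrite /Fword /Fstate; case: has112; case: (maxl w <= 1); case: has11. Qed.

(* The one-letter recursion of Fstate along the rules for {1123, 1234}:
   append 1, append 2, or append 3 if the maximum is >= 2 and 112 is absent. *)
Lemma FstateA m a b r : 1 <= m <= 3 ->
  Fstate m a b r.+1 =
  Fstate m true b r + Fstate (maxn m 2) a (b || a) r + ((2 <= m) && ~~ b) * Fstate 3 a b r.
Proof. by case: m => [|[|[|[|m]]]] // _; case: a; case: b; rewrite /Fstate /= ?expnS; lia. Qed.

(* The same along the rules for {1122, 1233}: append 1, append 2 if 112 is
   absent, or append a new maximum m+1 >= 3. *)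
Lemma FstateB m (a b : bool) r : 1 <= m -> (b -> 2 <= m) ->
  Fstate m a b r.+1 =
  Fstate m true b r + (~~ b) * Fstate (maxn m 2) a a r + (2 <= m) * Fstate m.+1 a b r.
Proof.
move=> H1 Hb; case: (leqP m 1) => Hm.
  case: b Hb => [/(_ isT)|_]; first by lia.
  have -> : m = 1 by lia.
  by case: a; rewrite /Fstate /= ?expnS; lia.
have -> : maxn m 2 = m by lia.
have Hm1 : (m <= 1) = false by lia.
have HSm1 : (m.+1 <= 1) = false by lia.
by rewrite /Fstate Hm1 HSm1; case: b Hb => _; case: a; rewrite /= ?expnS; lia.
Qed.

Lemma validA_weight w r x : valid TA w ->
  valid TA (rcons w x) * Fword (rcons w x) r =
  (x == 1) * Fstate (maxl w) true (has112 w) r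
  + (x == 2) * Fstate (maxn (maxl w) 2) (has11 w) (has112 w || has11 w) r
  + (x == 3) * (((2 <= maxl w) && ~~ has112 w) * Fstate 3 (has11 w) (has112 w) r).
Proof.
move=> Hv; have Hm3 := validA_maxl Hv; have Hr : is_rgf w by case/andP: Hv.
have Hm1 := maxl_pos Hr.
rewrite (validA_rcons _ Hv) /Fword maxl_rcons has11_rcons has112_rcons (rgf_has1 Hr).
case: x => [|[|[|[|x]]]] //=.
- by rewrite orbT orbF (maxn_idPl Hm1) !mul1n !mul0n !addn0.
- by rewrite andbT orbF !mul0n !mul1n add0n addn0 ltnS Hm1 mul1n.
- have -> : maxn (maxl w) 3 = 3 by lia.
  by rewrite !orbF !mul0n !add0n mul1n ltnS.
- by rewrite andbF !mul0n.
Qed.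

Lemma validA_step K w r : valid TA w -> size w + r.+1 <= K ->
  \sum_(0 <= x < K.+1) (valid TA (rcons w x) * Fword (rcons w x) r) = Fword w r.+1.
Proof.
move=> Hv Hs; have Hr : is_rgf w by case/andP: Hv.
have Hm1 := maxl_pos Hr; have Hm3 := validA_maxl Hv; have Hms := maxl_le_size Hr.
rewrite (eq_bigr _ (fun x _ => validA_weight r x Hv)) !big_split /= !sum_indicator.
have [-> ->] : (1 < K.+1) /\ (2 < K.+1) by case: (w) Hr Hs => //= *; lia.
rewrite !mul1n /Fword FstateA; last by rewrite Hm1 Hm3.
congr (_ + _); case: (ltnP 3 K.+1) => H; first by rewrite mul1n.
by have -> : (2 <= maxl w) = false by lia.
Qed.

Lemma validB_weight w r x : valid TB w ->
  valid TB (rcons w x) * Fword (rcons w x) r =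
  (x == 1) * Fstate (maxl w) true (has112 w) r
  + (x == 2) * ((~~ has112 w) * Fstate (maxn (maxl w) 2) (has11 w) (has11 w) r)
  + (x == (maxl w).+1) * ((2 <= maxl w) * Fstate (maxl w).+1 (has11 w) (has112 w) r).
Proof.
move=> Hv; have Hr : is_rgf w by case/andP: Hv.
have Hm1 := maxl_pos Hr.
rewrite (validB_rcons _ Hv) /Fword maxl_rcons has11_rcons has112_rcons (rgf_has1 Hr).
case: x => [|[|[|x]]] /=.
- by rewrite !mul0n.
- have -> : (1 == (maxl w).+1) = false by lia.
  by rewrite orbT orbF (maxn_idPl Hm1) !mul1n !mul0n !addn0.
- have -> : (2 == (maxl w).+1) * ((1 < maxl w) * Fstate (maxl w).+1 (has11 w) (has112 w) r) = 0.
    by case: (maxl w) Hm1 => [|[|m]].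
  by rewrite addn0 ltnS Hm1 mul0n add0n mul1n orbF; case: (has112 w).
- case: (eqVneq (maxl w) x.+2) => [E|NE].
    have -> : (x.+2 < (maxl w).+1 <= x.+3) = true by lia.
    have -> : (x.+3 == (maxl w).+1) = true by lia.
    have -> : maxn (maxl w) x.+3 = (maxl w).+1 by lia.
    have -> : (1 < maxl w) = true by lia.
    by rewrite !orbF !mul1n !mul0n.
  have -> : (x.+2 < (maxl w).+1 <= x.+3) = false by lia.
  have -> : (x.+3 == (maxl w).+1) = false by lia.
  by rewrite !mul0n.
Qed.

(* Fword satisfies the one-letter recursion of the {1122, 1233}-avoiding
   words; here the new maximum m + 1 <= size w + 1 must lie in the alphabet. *)
Lemma validB_step K w r : valid TB w -> size w + r.+1 <= K ->
  \sum_(0 <= x < K.+1) (valid TB (rcons w x) * Fword (rcons w x) r) = Fword w r.+1.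
Proof.
move=> Hv Hs; have Hr : is_rgf w by case/andP: Hv.
have Hm1 := maxl_pos Hr; have Hms := maxl_le_size Hr.
rewrite (eq_bigr _ (fun x _ => validB_weight r x Hv)) !big_split /= !sum_indicator.
have [-> -> ->] : [/\ 1 < K.+1, 2 < K.+1 & (maxl w).+1 < K.+1].
  by case: (w) Hr Hs Hms => //= *; split; lia.
by rewrite !mul1n /Fword FstateB //; exact: has112_maxl.
Qed.

(** * The closed form *)

(* If Fword satisfies the one-letter recursion of the T-avoiding words and
   T has no pattern of length <= 1, then p_{k+1}(T) = f3 k: every valid word
   starts with the letter 1, and the transfer lemma counts the completions
   of the word 1, whose state is (1, false, false). *)
Lemma p_state k T : (forall sigma, sigma \in T -> 1 < size sigma) ->
  (forall w r, valid T w -> size w + r.+1 <= k.+1 ->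
     \sum_(0 <= x < k.+2) (valid T (rcons w x) * Fword (rcons w x) r) = Fword w r.+1) ->
  p_ k.+1 T = f3 k.
Proof.
move=> HT Hstep; have Hvalid1 : valid T [:: 1].
  apply/andP; split; first by rewrite (rgf_rcons [::] 1).
  apply/allP => sigma Hsigma; apply/negP.
  case/containsP => s /size_subseq Hs /order_iso_size Es.
  by have := HT _ Hsigma; rewrite -Es; case: s Hs {Es} => [|? [|? ?]].
rewrite p_count (_ : count _ _ = completions (valid T) k.+1 [::] k.+1) // completionsS.
rewrite (eq_bigr (fun x => (x == 1) * Fword [:: 1] k)); last first.
  move=> x _; case: eqVneq => [->|Hx]; last first.
    rewrite mul0n completions_invalid //; first exact: valid_prefix.
    by rewrite /valid rgf_rcons (negbTE Hx).
  rewrite (completions_transfer (@valid_prefix T) (fun w _ => Fword0 w) Hstep) //.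
  exact: esym (mul1n _).
by rewrite sum_indicator mul1n /Fword (_ : maxl [:: 1] = 1) // /maxl big_ord1.
Qed.

Lemma f1E r : 2 * f1 r = 2 ^ r * (r + 2).
Proof. by elim: r => [//|r IH] /=; rewrite expnS; nia. Qed.

Lemma f2E r : 8 * f2 r = 2 ^ r * (r * r + 3 * r + 8).
Proof. by elim: r => [//|r IH] /=; have := f1E r; rewrite expnS; nia. Qed.

Lemma f3E k : 32 * f3 k.+1 = 2 ^ k.+2 * ((k.+2) ^ 2 - k.+2 + 14).
Proof.
have -> : (k.+2) ^ 2 - k.+2 + 14 = k * k + 3 * k + 16 by rewrite expnS expn1; lia.
by rewrite /f3 !expnS; have := f2E k; nia.
Qed.

Import GRing.Theory Num.Theory.
Local Open Scope ring_scope.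

Lemma f3_rat k :
  ((f3 k.+1)%:R : rat) = (2%:R : rat) ^ ((k.+2)%:Z - 5%:Z) * (((k.+2) ^ 2 - k.+2 + 14)%N)%:R.
Proof.
have Hr : (2%:R : rat) ^+ 5 * (f3 k.+1)%:R
          = (2%:R : rat) ^+ k.+2 * (((k.+2) ^ 2 - k.+2 + 14)%N)%:R.
  by rewrite -!natrX -!natrM f3E.
rewrite expfzDr ?pnatr_eq0 // -exprnP -exprnN mulrAC -Hr mulrC mulrA mulVf ?mul1r //.
Qed.

Theorem proposition4p19 (n : nat) (hn : (2 <= n)%N) :
  ((p_ n [:: [:: 1; 1; 2; 3]%N; [:: 1; 2; 3; 4]%N])%:R : rat)
    = (2%:R : rat) ^ (n%:Z - 5%:Z) * ((n ^ 2 - n + 14)%N)%:R /\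
  ((p_ n [:: [:: 1; 1; 2; 2]%N; [:: 1; 2; 3; 3]%N])%:R : rat)
    = (2%:R : rat) ^ (n%:Z - 5%:Z) * ((n ^ 2 - n + 14)%N)%:R.
Proof.
case: n hn => [|[|k]] // _.
split; rewrite (@p_state k.+1) ?f3_rat //.
- by move=> sigma; rewrite !inE => /orP [] /eqP ->.
- exact: validA_step.
- by move=> sigma; rewrite !inE => /orP [] /eqP ->.
- exact: validB_step.
Qed.
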